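(* Let $\mu=(\mu_1,\mu_2,\dots,\mu_m)$ be a composition of $n$, let $\lambda\vdash n$ and let $T$ be a standard Young tableau of shape $\lambda$. The probability that a $\mu$ shuffle has RSK recording tableau $T$ equals $K_{\lambda\mu}\big/\binom{n}{\mu_1,\mu_2,\dots,\mu_m}$.
   Context: A $\mu$ shuffle of $n$ cards: break the deck into consecutive piles of sizes $\mu_1,\mu_2,\dots$ and choose uniformly at random one of the $\binom{n}{\mu_1,\mu_2,\dots}$ interleavings of the piles. Concretely, the resulting permutation $w$ is obtained from a uniformly random word with exactly $\mu_i$ occurrences of the letter $i$ by placing $1,\dots,\mu_1$ at the positions of the $1$'s left to right, the next $\mu_2$ integers at the positions of the $2$'s left to right, etc.; $w(p)$ is the integer at position $p$. The RSK recording tableau is obtained by row-inserting $w(1),\dots,w(n)$. $K_{\lambda\mu}$ (Kostka number) is the number of semistandard Young tableaux of shape $\lambda$ in which $i$ appears exactly $\mu_i$ times. *)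

From mathcomp Require Import all_boot all_order all_algebra.
Set Implicit Arguments. Unset Strict Implicit. Unset Printing Implicit Defensive.

Definition is_composition (n : nat) (mu : seq nat) : bool :=
  all (fun k => 0 < k) mu && (sumn mu == n).

Definition is_partition (n : nat) (la : seq nat) : bool :=
  sorted geq la && all (fun k => 0 < k) la && (sumn la == n).

(* Tableaux are lists of rows (English convention, row 0 on top). *)
Definition cols_strict (t : seq (seq nat)) : bool :=
  all (fun i => all (fun j => nth 0 (nth [::] t i) j < nth 0 (nth [::] t i.+1) j)
                    (iota 0 (size (nth [::] t i.+1))))
      (iota 0 (size t)).

Definition has_shape (la : seq nat) (t : seq (seq nat)) : bool :=
  map size t == la.

Definition is_syt (la : seq nat) (t : seq (seq nat)) : bool :=
  [&& has_shape la t, perm_eq (flatten t) (iota 1 (sumn la)),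
      all (sorted ltn) t & cols_strict t].

Definition is_ssyt (t : seq (seq nat)) : bool :=
  all (sorted leq) t && cols_strict t.

(* Words over the alphabet {0,...,m-1} (letter i here stands for letter i+1
   of the paper) with exactly mu_i occurrences of letter i. *)
Definition has_content (mu : seq nat) (w : seq 'I_(size mu)) : bool :=
  [forall i : 'I_(size mu), count_mem i w == nth 0 mu i].

(* Kostka number K_{la,mu}: number of SSYT of shape la and content mu.
   A filling of shape la is encoded by its reading row by row (reshape). *)
Definition Kostka (la mu : seq nat) : nat :=
  #|[set w : (sumn la).-tuple 'I_(size mu) |
      has_content w && is_ssyt (reshape la (map (@nat_of_ord _) w))]|.

Definition shuffle_perm (mu : seq nat) (w : seq nat) : seq nat :=
  mkseq (fun p => let a := nth 0 w p in
                  sumn (take a mu) + count_mem a (take p w) + 1) (size w).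

Fixpoint bump_row (r : seq nat) (x : nat) : option (nat * seq nat) :=
  match r with
  | [::] => None
  | y :: r' => if x < y then Some (y, x :: r')
               else match bump_row r' x with
                    | None => None
                    | Some (z, r'') => Some (z, y :: r'')
                    end
  end.

(* Insert x into tableau t; returns the new tableau and the index of the row
   in which the new box was created. *)
Fixpoint rs_insert (t : seq (seq nat)) (x : nat) : seq (seq nat) * nat :=
  match t with
  | [::] => ([:: [:: x]], 0)
  | r :: t' => match bump_row r x with
               | None => (rcons r x :: t', 0)
               | Some (y, r') => let: (t'', i) := rs_insert t' y in (r' :: t'', i.+1)
               end
  end.

Definition add_box (q : seq (seq nat)) (i k : nat) : seq (seq nat) :=
  if i < size q then set_nth [::] q i (rcons (nth [::] q i) k)
  else rcons q [:: k].

Fixpoint rsk_aux (P Q : seq (seq nat)) (k : nat) (w : seq nat)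
  : seq (seq nat) * seq (seq nat) :=
  match w with
  | [::] => (P, Q)
  | x :: w' => let: (P', i) := rs_insert P x in rsk_aux P' (add_box Q i k) k.+1 w'
  end.

Definition RSK_Q (w : seq nat) : seq (seq nat) := (rsk_aux [::] [::] 1 w).2.

(* Probability that a mu shuffle (uniform random word with content mu) has
   recording tableau T. *)
Definition shuffle_prob (mu : seq nat) (T : seq (seq nat)) : rat :=
  (#|[set w : (sumn mu).-tuple 'I_(size mu) |
        has_content w && (RSK_Q (shuffle_perm mu (map (@nat_of_ord _) w)) == T)]|%:R
   / #|[set w : (sumn mu).-tuple 'I_(size mu) | has_content w]|%:R)%R.

Definition multinomial (n : nat) (mu : seq nat) : rat :=
  ((n`!)%:R / \prod_(k <- mu) (k`!)%:R)%R.

From mathcomp Require Import all_boot all_order all_algebra zify.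
Set Implicit Arguments. Unset Strict Implicit. Unset Printing Implicit Defensive.

(* Row insertion of a word is invertible box by box: given the insertion
   tableau P and the box created last, reverse bumping recovers the previous
   tableau and the inserted letter.  Hence RSK is a bijection from words of
   length n onto pairs (P, Q) of equal shape with P semistandard and Q
   standard, the content of P being that of the word.  The permutation of a
   mu shuffle is the standardization of its word w (equal letters numbered
   from left to right); since row insertion commutes with a weakly increasing
   relabelling that respects this tie-breaking, the shuffle and w have the
   same recording tableau.  So the words of content mu with recording tableau
   T correspond, through their insertion tableaux, to the semistandard
   tableaux of shape lambda and content mu: there are K_{lambda mu} of them
   among the n!/(mu_1! ... mu_m!) words of content mu. *)

(** * Row insertion and reverse bumping *)

Definition row_insert (r : seq nat) (x : nat) : seq nat :=
  if bump_row r x is Some (_, r') then r' else rcons r x.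

(* Reverse bumping: z replaces the rightmost entry y < z, which is bumped out. *)
Fixpoint unbump_row (r : seq nat) (z : nat) : option (nat * seq nat) :=
  match r with
  | [::] => None
  | y :: r' => match unbump_row r' z with
               | Some (y', r'') => Some (y', y :: r'')
               | None => if y < z then Some (y, z :: r') else None
               end
  end.

Variant bump_row_spec (r : seq nat) (x : nat) : option (nat * seq nat) -> Type :=
  | BumpRowNone of all (fun u => u <= x) r : bump_row_spec r x None
  | BumpRowSome a y b of r = a ++ y :: b & all (fun u => u <= x) a & x < y :
      bump_row_spec r x (Some (y, a ++ x :: b)).

Lemma bump_rowP r x : bump_row_spec r x (bump_row r x).
Proof.
elim: r => [|u r IH] /=; first exact: BumpRowNone.
case: ltnP => [xu|ux]; first exact: (@BumpRowSome _ _ [::]).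
case: IH => [Hr|a y b -> Ha xy]; first by apply: BumpRowNone; rewrite /= ux.
by apply: (@BumpRowSome _ _ (u :: a)); rewrite //= ux.
Qed.

Variant unbump_row_spec (r : seq nat) (z : nat) : option (nat * seq nat) -> Type :=
  | UnbumpRowNone of all (fun u => z <= u) r : unbump_row_spec r z None
  | UnbumpRowSome a y b of r = a ++ y :: b & all (fun u => z <= u) b & y < z :
      unbump_row_spec r z (Some (y, a ++ z :: b)).

Lemma unbump_rowP r z : unbump_row_spec r z (unbump_row r z).
Proof.
elim: r => [|u r IH] /=; first exact: UnbumpRowNone.
case: IH => [Hr|a y b -> Hb yz]; last exact: (@UnbumpRowSome _ _ (u :: a)).
case: ltnP => [uz|zu]; first exact: (@UnbumpRowSome _ _ [::]).
by apply: UnbumpRowNone; rewrite /= zu.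
Qed.

Lemma pairwise_leq_cat_cons a y b :
  pairwise leq (a ++ y :: b) =
  [&& all (fun u => u <= y) a, all (fun u => y <= u) b, pairwise leq a & pairwise leq b].
Proof.
rewrite pairwise_cat /= allrel_consr -!andbA; apply/idP/idP.
  by case/and5P=> -> _ -> -> ->.
case/and4P=> Ha Hb -> ->; rewrite Ha Hb /= !andbT.
apply/allrelP=> u v /(allP Ha) uy /(allP Hb); exact: leq_trans.
Qed.

Lemma bump_row_cat a y b x : all (fun u => u <= x) a -> x < y ->
  bump_row (a ++ y :: b) x = Some (y, a ++ x :: b).
Proof.
elim: a => [|u a IH] /=; first by move=> _ ->.
by case/andP=> ux /IH H /H ->; rewrite ltnNge ux.
Qed.

Lemma unbump_row_cat a y b z : y < z -> all (fun u => z <= u) b ->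
  unbump_row (a ++ y :: b) z = Some (y, a ++ z :: b).
Proof.
move=> yz Hb; elim: a => [|u a IH] /=; last by rewrite IH.
have -> : unbump_row b z = None.
  by elim: b Hb {yz} => [|v b IHb] //= /andP[zv /IHb ->]; rewrite ltnNge zv.
by rewrite yz.
Qed.

Lemma bump_rowK r x y r' : pairwise leq r -> bump_row r x = Some (y, r') ->
  unbump_row r' y = Some (x, r).
Proof.
case: bump_rowP => // a y0 b -> _ xy; rewrite pairwise_leq_cat_cons => /and4P[_ Hb _ _] [<- <-].
exact: unbump_row_cat.
Qed.

Lemma unbump_rowK r z y r1 : pairwise leq r -> unbump_row r z = Some (y, r1) ->
  bump_row r1 y = Some (z, r).
Proof.
case: unbump_rowP => // a y0 b -> _ yz; rewrite pairwise_leq_cat_cons => /and4P[Ha _ _ _] [<- <-].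
exact: bump_row_cat.
Qed.

Lemma row_insert_sorted r x : pairwise leq r -> pairwise leq (row_insert r x).
Proof.
rewrite /row_insert; case: bump_rowP => [Hr|a y b -> Ha xy].
  by rewrite -cats1 pairwise_leq_cat_cons Hr /= andbT.
rewrite !pairwise_leq_cat_cons Ha => /and4P[_ Hb -> ->]; rewrite !andbT.
by apply: sub_all Hb => u; apply: leq_trans (ltnW xy).
Qed.

Lemma unbump_row_sorted r z y r1 : pairwise leq r -> unbump_row r z = Some (y, r1) ->
  pairwise leq r1.
Proof.
case: unbump_rowP => // a y0 b -> Hb yz; rewrite pairwise_leq_cat_cons.
case/and4P=> Ha _ pa pb [_ <-]; rewrite pairwise_leq_cat_cons Hb pa pb !andbT.
by apply: sub_all Ha => u /leq_trans; apply; apply: ltnW.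
Qed.

Lemma bump_row_None r x : all (fun u => u <= x) r -> bump_row r x = None.
Proof. by case: bump_rowP => // a y b -> _ xy; rewrite all_cat /= => /and3P[_ yx _]; lia. Qed.

Lemma row_insert_neq0 r x : row_insert r x != [::].
Proof. by rewrite /row_insert; case: bump_rowP => [_|a y b _ _ _]; [case: r | case: a]. Qed.

(** * Column-strictness by counting *)

Lemma count_all_size T (a : pred T) s : all a s -> count a s = size s.
Proof. by rewrite all_count => /eqP. Qed.

Lemma count_none (T : eqType) (a : pred T) s : {in s, forall x, ~~ a x} -> count a s = 0.
Proof. by move=> H; apply/eqP; rewrite -leqn0 leqNgt -has_count; apply/hasPn. Qed.

Definition cnt_le (s : seq nat) v := count (fun u => u <= v) s.
Definition cnt_lt (s : seq nat) v := count (fun u => u < v) s.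

(* For weakly increasing rows, [above r s] says that s fits under r in a
   column-strict tableau ([aboveP]); unlike the entrywise comparison, this
   form is stable under bumping. *)
Definition above (r s : seq nat) : Prop := forall v, cnt_le s v <= cnt_lt r v.

Lemma count_cat_cons T (p : pred T) a y b :
  count p (a ++ y :: b) = count p a + p y + count p b.
Proof. by rewrite count_cat /= addnA. Qed.

Lemma cnt_le_mono s u v : u <= v -> cnt_le s u <= cnt_le s v.
Proof. by move=> uv; apply: sub_count => w /= /leq_trans; apply. Qed.

Lemma cnt_lt_bump r x y r' v : bump_row r x = Some (y, r') -> cnt_lt r v <= cnt_lt r' v.
Proof. by case: bump_rowP => // a y0 b -> _ xy [_ <-]; rewrite /cnt_lt !count_cat_cons /=; lia. Qed.

Lemma cnt_lt_bump_ge r x y r' v : pairwise leq r -> bump_row r x = Some (y, r') ->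
  y <= v -> (cnt_lt r y).+1 <= cnt_lt r' v.
Proof.
case: bump_rowP => // a y0 b -> Ha xy; rewrite pairwise_leq_cat_cons => /and4P[_ Hb _ _].
move=> [<- <-] yv; rewrite /cnt_lt !count_cat_cons /=.
have -> : count (fun u => u < y0) b = 0.
  by apply: count_none => u /(allP Hb); rewrite -leqNgt.
have -> : count (fun u => u < v) a = size a.
  by apply: count_all_size; apply: sub_all Ha => u /= ux; lia.
have := count_size (fun u => u < y0) a; lia.
Qed.

Lemma cnt_le_row_insert_lt s y v : v < y -> cnt_le (row_insert s y) v <= cnt_le s v.
Proof.
rewrite /row_insert /cnt_le; case: bump_rowP => [_|a z b -> _ yz] vy.
  by rewrite -cats1 count_cat /=; lia.
by rewrite !count_cat_cons /=; lia.
Qed.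

Lemma cnt_le_row_insert_ge s y v : pairwise leq s -> y <= v ->
  cnt_le (row_insert s y) v <= maxn (cnt_le s v) (cnt_le s y).+1.
Proof.
rewrite /row_insert /cnt_le; case: bump_rowP => [Hs|a z b -> Ha yz] ps yv.
  rewrite (count_all_size Hs).
  by rewrite -cats1 count_cat /= yv; have := count_size (fun u => u <= v) s; lia.
move: ps; rewrite pairwise_leq_cat_cons => /and4P[_ Hb _ _].
rewrite !count_cat_cons /=; case: (leqP z v) => zv; first by lia.
have Hbv : forall w, w < z -> count (fun u => u <= w) b = 0.
  move=> w wz; apply: count_none => u /(allP Hb) zu.
  by rewrite -ltnNge; apply: leq_trans zu.
rewrite !Hbv //; have -> : count (fun u => u <= v) a = count (fun u => u <= y) a.
  by apply: eq_in_count => u /(allP Ha) /= uy; lia.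
lia.
Qed.

Lemma above_bump r s x y r' : pairwise leq r -> pairwise leq s -> above r s ->
  bump_row r x = Some (y, r') -> above r' (row_insert s y).
Proof.
move=> pr ps rs bx v; have := cnt_lt_bump v bx.
case: (ltnP v y) => [vy|yv].
  by have := cnt_le_row_insert_lt s vy; have := rs v; lia.
have := cnt_le_row_insert_ge ps yv; have := cnt_lt_bump_ge pr bx yv.
have := rs v; have := rs y; lia.
Qed.

Lemma cnt_lt_unbump_eq r z y r1 v : unbump_row r z = Some (y, r1) ->
  (v <= y) || (z < v) -> cnt_lt r1 v = cnt_lt r v.
Proof.
by case: unbump_rowP => // a y0 b -> _ yz [<- <-]; rewrite /cnt_lt !count_cat_cons /=; lia.
Qed.

Lemma cnt_lt_unbump r z y r1 v : unbump_row r z = Some (y, r1) ->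
  cnt_lt r v <= (cnt_lt r1 v).+1.
Proof.
by case: unbump_rowP => // a y0 b -> _ yz [_ <-]; rewrite /cnt_lt !count_cat_cons /=; lia.
Qed.

Lemma cnt_lt_unbump_mid r z y r1 v : pairwise leq r -> unbump_row r z = Some (y, r1) ->
  y < v <= z -> cnt_lt r v = cnt_lt r z.
Proof.
case: unbump_rowP => // a y0 b -> Hb yz; rewrite pairwise_leq_cat_cons => /and4P[Ha _ _ _].
move=> [<- _] /andP[yv vz]; rewrite /cnt_lt !count_cat_cons.
have Ea : forall w, y0 < w -> count (fun u => u < w) a = size a.
  by move=> w yw; apply: count_all_size; apply: sub_all Ha => u /= uy; lia.
have Eb : forall w, w <= z -> count (fun u => u < w) b = 0.
  move=> w wz; apply: count_none => u /(allP Hb) zu.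
  by rewrite -leqNgt; apply: leq_trans zu.
by rewrite !Ea ?Eb //=; lia.
Qed.

Lemma cnt_le_row_insert s z v : cnt_le s v <= cnt_le (row_insert s z) v.
Proof.
rewrite /row_insert /cnt_le; case: bump_rowP => [_|a y b -> _ zy].
  by rewrite -cats1 count_cat leq_addr.
by rewrite !count_cat_cons /=; lia.
Qed.

Lemma cnt_le_row_insert_self s z v : v <= z -> cnt_le s v < cnt_le (row_insert s z) z.
Proof.
move=> vz; apply: leq_trans (_ : (cnt_le s z).+1 <= _); first by rewrite ltnS cnt_le_mono.
rewrite /row_insert /cnt_le; case: bump_rowP => [_|a y b -> _ zy].
  by rewrite -cats1 count_cat /= leqnn addn1.
by rewrite !count_cat_cons /= leqnn; lia.
Qed.

Lemma above_unbump r s z : pairwise leq r -> above r (row_insert s z) ->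
  exists y r1, unbump_row r z = Some (y, r1) /\ above r1 s.
Proof.
move=> pr rs; have pos : 0 < cnt_lt r z.
  by apply: leq_trans (rs z); apply: leq_ltn_trans (cnt_le_row_insert_self s (leqnn z)).
case E: (unbump_row r z) => [[y r1]|]; last first.
  move: E pos; case: unbump_rowP => // Hr _.
  by rewrite /cnt_lt -has_count => /hasP[u /(allP Hr) zu /= uz]; lia.
exists y, r1; split => // v.
have := cnt_lt_unbump v E; have := cnt_le_row_insert s z v.
case: (leqP v y) => [vy|yv].
  by rewrite (cnt_lt_unbump_eq E) ?vy //; have := rs v; lia.
case: (leqP v z) => [vz|zv]; last first.
  by rewrite (cnt_lt_unbump_eq E) ?zv ?orbT //; have := rs v; lia.
rewrite (cnt_lt_unbump_mid pr E) ?yv ?vz //.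
by have := cnt_le_row_insert_self s vz; have := rs z; lia.
Qed.

(** * Tableaux and row insertion *)

Lemma above_rcons_l r x s : above r s -> above (rcons r x) s.
Proof. by move=> rs v; apply: leq_trans (rs v) _; rewrite /cnt_lt -cats1 count_cat leq_addr. Qed.

Lemma above_rcons_r r s z : above r (rcons s z) -> above r s.
Proof. by move=> rs v; apply: leq_trans (rs v); rewrite /cnt_le -cats1 count_cat leq_addr. Qed.

Lemma above_belast r z s : all (fun u => u <= z) r -> size s <= size r ->
  above (rcons r z) s -> above r s.
Proof.
move=> Hr Hs rs v; have := rs v; rewrite /cnt_lt -cats1 count_cat /= addn0.
case: (ltnP z v) => zv; last by rewrite addn0.
have -> : count (fun u => u < v) r = size r.
  by apply: count_all_size; apply: sub_all Hr => u /= uz; lia.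
by move=> _; apply: leq_trans (count_size _ _) Hs.
Qed.

Fixpoint is_tab (t : seq (seq nat)) : Prop :=
  if t is r :: t' then [/\ r != [::], pairwise leq r, above r (head [::] t') & is_tab t']
  else True.

Lemma is_tab_head_sorted t : is_tab t -> pairwise leq (head [::] t).
Proof. by case: t => [|r t] //= []. Qed.

Lemma is_tab_row_sorted t i : is_tab t -> pairwise leq (nth [::] t i).
Proof.
elim: t i => [|r t IH] [|i] //= [_ pr _ tt]; [by [] | exact: IH].
Qed.

Lemma is_tab_above t i : is_tab t -> above (nth [::] t i) (nth [::] t i.+1).
Proof.
elim: t i => [|r t IH] i /=; first by rewrite !nth_nil.
by move=> [_ _ rt tt]; case: i => [|i] /=; [case: (t) rt | exact: IH].
Qed.

Lemma is_tab_shape_pos t : is_tab t -> all (fun k => 0 < k) (map size t).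
Proof. by elim: t => [|r t IH] //= [rn _ _ /IH ->]; rewrite andbT lt0n size_eq0. Qed.

Lemma shape_pos_rows_neq0 (t : seq (seq nat)) :
  all (fun k => 0 < k) (map size t) -> all (fun r => r != [::]) t.
Proof. by rewrite all_map; apply: sub_all => r /=; rewrite lt0n size_eq0. Qed.

Lemma rs_insert_cons r t x : rs_insert (r :: t) x =
  if bump_row r x is Some (y, r') then (r' :: (rs_insert t y).1, (rs_insert t y).2.+1)
  else (rcons r x :: t, 0).
Proof. by rewrite /=; case: (bump_row r x) => [[y r']|] //; case: (rs_insert t y). Qed.

Lemma head_rs_insert t x : head [::] (rs_insert t x).1 = row_insert (head [::] t) x.
Proof. by case: t => [|r t] //; rewrite rs_insert_cons /row_insert; case: bump_row => [[]|]. Qed.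

Lemma is_tab_rs_insert t x : is_tab t -> is_tab (rs_insert t x).1.
Proof.
elim: t x => [|r t IH] x; first by [].
case=> rn pr rt tt; rewrite rs_insert_cons.
have rx := row_insert_neq0 r x; have prx := row_insert_sorted x pr.
rewrite /row_insert in rx prx; case E: bump_row rx prx => [[y r']|] /= rx prx.
  split=> //; last exact: IH.
  by rewrite head_rs_insert; apply: above_bump E => //; apply: is_tab_head_sorted.
by split=> //; apply: above_rcons_l.
Qed.

Lemma rs_insert_count t x (p : pred nat) :
  count p (flatten (rs_insert t x).1) = p x + count p (flatten t).
Proof.
elim: t x => [|r t IH] x; first by rewrite /= addn0.
rewrite rs_insert_cons; case: bump_rowP => [_|a y b -> _ _] /=.
  by rewrite -cats1 !count_cat /=; lia.
by rewrite !count_cat IH /=; lia.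
Qed.

Lemma rs_insert_perm t x : perm_eq (flatten (rs_insert t x).1) (x :: flatten t).
Proof. by apply/permP=> p; rewrite rs_insert_count. Qed.

Lemma rs_insert_shape t x :
  map size (rs_insert t x).1 = incr_nth (map size t) (rs_insert t x).2.
Proof.
elim: t x => [|r t IH] x //; rewrite rs_insert_cons.
case: bump_rowP => [_|a y b -> _ _] /=; first by rewrite size_rcons.
by rewrite IH !size_cat.
Qed.

Lemma rs_insert_row_leq t x : (rs_insert t x).2 <= size t.
Proof.
elim: t x => [|r t IH] x //; rewrite rs_insert_cons.
by case: bump_row => [[y r']|] //=; apply: IH.
Qed.

Lemma rs_insert_inj t t' x x' : is_tab t -> is_tab t' -> rs_insert t x = rs_insert t' x' ->
  t = t' /\ x = x'.
Proof.
elim: t t' x x' => [|r t IH] [|r' t'] x x' //.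
- by move=> _ _ [->].
- move=> _ [rn _ _ _]; rewrite rs_insert_cons; case: (bump_row r' x') => [[y r1]|] //= [].
  by case: (r') rn => [|u [|v w]] //= _ -> _.
- move=> [rn _ _ _] _; rewrite rs_insert_cons; case: (bump_row r x) => [[y r1]|] //= [].
  by case: (r) rn => [|u [|v w]] //= _ <- _.
move=> [_ pr _ tt] [_ pr' _ tt']; rewrite !rs_insert_cons.
case E: (bump_row r x) => [[y r1]|]; case E': (bump_row r' x') => [[y' r1']|] //=.
- move=> [e1 e2 e3]; have [-> ey] := IH _ _ _ tt tt' (injective_projections _ _ e2 e3).
  by move: (bump_rowK pr E) (bump_rowK pr' E'); rewrite e1 ey => -> [-> ->].
- by move=> [/rcons_inj [-> ->] ->].
Qed.

Lemma add_box0 r t k : add_box (r :: t) 0 k = rcons r k :: t.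
Proof. by []. Qed.

Lemma add_boxS r t i k : add_box (r :: t) i.+1 k = r :: add_box t i k.
Proof. by rewrite /add_box /= ltnS; case: ifP. Qed.

Lemma add_box_count t i k (p : pred nat) :
  count p (flatten (add_box t i k)) = p k + count p (flatten t).
Proof.
elim: t i => [|r t IH] [|i]; rewrite ?add_box0 ?add_boxS /= -?cats1 ?count_cat ?IH /=; lia.
Qed.

Lemma add_box_shape t i k : i <= size t ->
  map size (add_box t i k) = incr_nth (map size t) i.
Proof.
elim: t i => [|r t IH] [|i] //=; rewrite ?add_box0 ?add_boxS /=; first by rewrite size_rcons.
by move=> H; rewrite IH.
Qed.

Lemma rs_insert_max t z :
  all (fun u => u <= z) (head [::] t) -> rs_insert t z = (add_box t 0 z, 0).
Proof. by case: t => [|r t] //= Hr; rewrite bump_row_None. Qed.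

Definition corner (t : seq (seq nat)) (i : nat) : bool :=
  (i < size t) && (size (nth [::] t i.+1) < size (nth [::] t i)).

Lemma corner_shape t t' i : map size t = map size t' -> corner t i = corner t' i.
Proof.
move=> e; have es : size t = size t' by rewrite -(size_map size) e size_map.
have f j : size (nth [::] t j) = size (nth [::] t' j).
  case: (ltnP j (size t)) => hj; first by rewrite -!(nth_map [::] 0 size) -?es // e.
  by rewrite !nth_default // -es.
by rewrite /corner es !f.
Qed.

Lemma is_tab_remove_corner t i : is_tab t -> corner t i -> exists t1 z,
  [/\ t = add_box t1 i z, is_tab t1, i <= size t1, nth [::] t i = rcons (nth [::] t1 i) z
    & forall r, above r (head [::] t) -> above r (head [::] t1)].
Proof.
elim: t i => [|r t IH] i; first by rewrite /corner.
case=> rn pr rt tt; case: i => [|i] /andP[/= Hi Hc]; last first.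
  have [t1 [z [Et tt1 Hs Hn Hh]]] := IH i tt (introT andP (conj Hi Hc)); subst t.
  by exists (r :: t1), z; split; rewrite ?add_boxS //=; split=> //; apply: Hh.
case/lastP: r rn pr rt Hc => [|r z] // _; rewrite -cats1 pairwise_leq_cat_cons cats1.
case/and4P=> Hr _ pr _ rt Hc; case: r Hr pr rt Hc => [|u r] Hr pr rt Hc.
  suff -> : t = [::] by exists [::], z.
  by case: t tt Hc {rt IH Hi} => [|[|? ?] ?] // [].
exists ((u :: r) :: t), z; split=> //; last by move=> r0 /above_rcons_r.
split=> //; apply: above_belast rt => //.
by move: Hc; rewrite /= size_rcons; case: (t) => [|s t'] /=; lia.
Qed.

Lemma rs_insert_onto P i : is_tab P -> corner P i ->
  exists P1 x, is_tab P1 /\ rs_insert P1 x = (P, i).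
Proof.
elim: P i => [|r t IH] [|i] // tP cP.
  have [P1 [z [Et tP1 _ Hn _]]] := is_tab_remove_corner tP cP.
  exists P1, z; split=> //; rewrite Et rs_insert_max //.
  have := is_tab_row_sorted 0 tP; rewrite Hn.
  by rewrite -cats1 pairwise_leq_cat_cons nth0 => /and4P[].
case: tP cP => rn pr rt tt /andP[Hi Hc].
have [P1 [x [tP1 ins]]] := IH i tt (introT andP (conj Hi Hc)).
have Ht : t = (rs_insert P1 x).1 by rewrite ins.
rewrite Ht head_rs_insert in rt.
have [y [r1 [U rP1]]] := above_unbump pr rt.
have B := unbump_rowK pr U.
exists (r1 :: P1), y; split; last by rewrite rs_insert_cons B ins.
split=> //; last exact: unbump_row_sorted U.
by apply/eqP=> r10; rewrite r10 in B.
Qed.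

Definition is_std_tab (T : seq (seq nat)) (n : nat) : Prop :=
  is_tab T /\ perm_eq (flatten T) (iota 1 n).

Lemma std_tab_remove_max T n : is_std_tab T n.+1 -> exists i T',
  [/\ T = add_box T' i n.+1, i <= size T', is_std_tab T' n & corner T i].
Proof.
move=> [tT pT].
have Tmax e : e \in flatten T -> e <= n.+1 by rewrite (perm_mem pT) mem_iota; lia.
have /flattenP [r rT Nr] : n.+1 \in flatten T by rewrite (perm_mem pT) mem_iota; lia.
set i := index r T; have Hi : i < size T by rewrite index_mem.
have Hr : nth [::] T i = r by rewrite nth_index.
(* Row i contains n.+1 while row i.+1 has only entries <= n.+1, so [above]
   forces row i.+1 to be shorter. *)
have Hc : corner T i.
  rewrite /corner Hi /=; have := is_tab_above i tT n.+1; rewrite Hr.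
  have -> : cnt_le (nth [::] T i.+1) n.+1 = size (nth [::] T i.+1).
    apply: count_all_size; apply/allP=> u hu; apply: Tmax; apply/flattenP.
    exists (nth [::] T i.+1) => //; apply: mem_nth.
    by case: ltnP hu => // H; rewrite nth_default.
  move/leq_ltn_trans; apply; rewrite /cnt_lt -(count_predC (fun u => u < n.+1) r).
  by rewrite -[X in X < _]addn0 ltn_add2l -has_count; apply/hasP; exists n.+1; rewrite //= ltnn.
have [T1 [z [ET tT1 Hs Hn _]]] := is_tab_remove_corner tT Hc.
have ez : z = n.+1.
  have : z \in flatten T by apply/flattenP; exists r; rewrite // -Hr Hn mem_rcons mem_head.
  move/Tmax; have := is_tab_row_sorted i tT; move: Nr.
  rewrite -Hr Hn -cats1 pairwise_leq_cat_cons mem_cat inE orbC.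
  by case/orP=> [/eqP ->|/[swap] /and4P[/allP Ha _ _ _] /Ha] //; lia.
subst z; exists i, T1; split=> //; split=> //; apply/permP => p.
move/permP/(_ p): pT; rewrite ET add_box_count -addn1 iotaD count_cat /= addn0.
by rewrite addn1 addnC => /addIn.
Qed.

(** * The RSK correspondence for words *)

Definition rsk (w : seq nat) : seq (seq nat) * seq (seq nat) := rsk_aux [::] [::] 1 w.

Lemma rsk_aux_rcons P Q k w x : rsk_aux P Q k (rcons w x) =
  let: (P', Q') := rsk_aux P Q k w in
  ((rs_insert P' x).1, add_box Q' (rs_insert P' x).2 (k + size w)).
Proof.
elim: w P Q k => [|y w IH] P Q k /=; first by rewrite addn0; case: rs_insert.
by case: (rs_insert P y) => P' i; rewrite IH addSnnS.
Qed.

Lemma rsk_rcons w x : rsk (rcons w x) =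
  ((rs_insert (rsk w).1 x).1, add_box (rsk w).2 (rs_insert (rsk w).1 x).2 (size w).+1).
Proof. by rewrite /rsk rsk_aux_rcons; case: rsk_aux. Qed.

Lemma is_tab_rsk w : is_tab (rsk w).1.
Proof. by elim/last_ind: w => [|w x IH] //; rewrite rsk_rcons; apply: is_tab_rs_insert. Qed.

Lemma rsk_count w (p : pred nat) : count p (flatten (rsk w).1) = count p w.
Proof.
elim/last_ind: w => [|w x IH] //.
by rewrite rsk_rcons rs_insert_count IH -cats1 count_cat /= addn0 addnC.
Qed.

Lemma rsk_shape w : map size (rsk w).1 = map size (rsk w).2.
Proof.
elim/last_ind: w => [|w x IH] //; rewrite rsk_rcons /= rs_insert_shape add_box_shape -?IH //.
by rewrite -(size_map size) -IH size_map rs_insert_row_leq.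
Qed.

Lemma rsk_recording_content w : perm_eq (flatten (rsk w).2) (iota 1 (size w)).
Proof.
elim/last_ind: w => [|w x IH] //; apply/permP => p; move/permP/(_ p): IH => IH.
rewrite rsk_rcons add_box_count size_rcons -[(size w).+1]addn1 iotaD count_cat /=.
by rewrite add1n addn1 addn0 IH addnC.
Qed.

Lemma rsk_recording_rows w : all (fun r => r != [::]) (rsk w).2.
Proof.
by apply: shape_pos_rows_neq0; rewrite -rsk_shape; apply/is_tab_shape_pos/is_tab_rsk.
Qed.

Lemma filter_predC1_id k (r : seq nat) : k \notin r -> filter (predC1 k) r = r.
Proof. by move=> kr; apply/all_filterP/allP=> u ur /=; apply: contraNneq kr => <-. Qed.

Lemma drop_entry_id k (Q : seq (seq nat)) : all (fun r => r != [::]) Q -> k \notin flatten Q ->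
  [seq r <- [seq filter (predC1 k) r | r <- Q] | r != [::]] = Q.
Proof.
elim: Q => [|r Q IH] //= /andP[rn Qn]; rewrite mem_cat negb_or => /andP[kr kQ].
by rewrite filter_predC1_id // rn IH.
Qed.

Lemma add_boxK k Q i : all (fun r => r != [::]) Q -> k \notin flatten Q -> i <= size Q ->
  [seq r <- [seq filter (predC1 k) r | r <- add_box Q i k] | r != [::]] = Q.
Proof.
elim: Q i => [|r Q IH] i; first by case: i => //= _ _ _; rewrite eqxx.
case/andP=> rn Qn; rewrite mem_cat negb_or => /andP[kr kQ].
case: i => [|i] iQ; rewrite ?add_box0 ?add_boxS /= -?cats1 ?filter_cat /= ?eqxx ?cats0.
  by rewrite filter_predC1_id // rn drop_entry_id.
by rewrite filter_predC1_id // rn IH.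
Qed.

Lemma add_box_row k Q i : k \notin flatten Q -> i <= size Q ->
  find (fun r => k \in r) (add_box Q i k) = i.
Proof.
elim: Q i => [|r Q IH] i; first by case: i => //= _ _; rewrite mem_head.
rewrite mem_cat negb_or => /andP[kr kQ]; case: i => [|i] iQ; rewrite ?add_box0 ?add_boxS /=.
  by rewrite mem_rcons mem_head.
by rewrite (negbTE kr) IH.
Qed.

Lemma add_box_inj k Q Q' i i' :
  all (fun r => r != [::]) Q -> all (fun r => r != [::]) Q' ->
  k \notin flatten Q -> k \notin flatten Q' -> i <= size Q -> i' <= size Q' ->
  add_box Q i k = add_box Q' i' k -> Q = Q' /\ i = i'.
Proof.
move=> Qn Q'n kQ kQ' iQ iQ' e; split; first by rewrite -(add_boxK Qn kQ iQ) e add_boxK.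
by rewrite -(add_box_row kQ iQ) e add_box_row.
Qed.

Lemma rsk_inj w1 w2 : size w1 = size w2 -> rsk w1 = rsk w2 -> w1 = w2.
Proof.
elim/last_ind: w1 w2 => [|w1 x1 IH] w2; first by case: w2.
case/lastP: w2 => [|w2 x2]; first by rewrite size_rcons.
rewrite !size_rcons => -[sz]; rewrite !rsk_rcons => -[eP eQ].
have fresh w : (size w).+1 \notin flatten (rsk w).2.
  by rewrite (perm_mem (rsk_recording_content w)) mem_iota; lia.
have row_leq w x : (rs_insert (rsk w).1 x).2 <= size (rsk w).2.
  by rewrite -(size_map size) -rsk_shape size_map rs_insert_row_leq.
have fresh1 := fresh w1; rewrite sz in fresh1 eQ.
have [eQ2 ei] := add_box_inj (rsk_recording_rows _) (rsk_recording_rows _)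
  fresh1 (fresh w2) (row_leq _ _) (row_leq _ _) eQ.
have [eP2 ->] : (rsk w1).1 = (rsk w2).1 /\ x1 = x2.
  apply: rs_insert_inj (is_tab_rsk _) (is_tab_rsk _) _.
  by move: eP ei; case: (rs_insert _ x1); case: (rs_insert _ x2) => ? ? ? ? /= -> ->.
by rewrite (IH w2) // [rsk w1]surjective_pairing [rsk w2]surjective_pairing eP2 eQ2.
Qed.

Lemma incr_nth_inj s s' i : all (fun k => 0 < k) s -> all (fun k => 0 < k) s' ->
  incr_nth s i = incr_nth s' i -> s = s'.
Proof.
elim: s s' i => [|a s IH] [|a' s'] [|i] //=.
- by move=> _ /andP[+ _] [e _]; rewrite -e.
- by move=> _ /andP[+ _] [e _]; rewrite -e.
- by move=> /andP[+ _] _ [e _]; rewrite e.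
- by move=> /andP[+ _] _ [e _]; rewrite e.
- by move=> _ _ [-> ->].
- by move=> /andP[_ H] /andP[_ H'] [-> /(IH _ _ H H') ->].
Qed.

Lemma rsk_onto n T P : is_std_tab T n -> is_tab P -> map size P = map size T ->
  exists w, size w = n /\ rsk w = (P, T).
Proof.
elim: n T P => [|n IH] T P.
  move=> [tT /perm_size]; rewrite size_iota => sT tP sh.
  have eT : T = [::].
    by case: T tT sT {sh} => [|r T] // [rn _ _ _]; rewrite /= size_cat; case: (r) rn.
  by subst T; case: P tP sh => // _ _; exists [::].
move=> sT tP sh; have [i [T' [ET Hs sT' Hc]]] := std_tab_remove_max sT.
have [P1 [x [tP1 ins]]] := rs_insert_onto tP (etrans (corner_shape i sh) Hc).
have sh1 : map size P1 = map size T'.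
  apply: (@incr_nth_inj _ _ i); [exact: is_tab_shape_pos | exact: is_tab_shape_pos sT'.1 |].
  by have := rs_insert_shape P1 x; rewrite ins /= => <-; rewrite sh ET add_box_shape.
have [w1 [sw1 e1]] := IH _ _ sT' tP1 sh1.
by exists (rcons w1 x); rewrite size_rcons sw1 rsk_rcons e1 /= ins sw1 ET.
Qed.

(** * Standardization *)

Section MonotoneImage.
Variable g : nat -> nat.
Hypothesis g_mono : {homo g : u v / u <= v}.

Definition ties_below (x : nat) (S : seq nat) := forall z, z \in S -> g z = g x -> z < x.

(* Ties under [g] are broken as in a standardization: an entry of a lower row
   tied with [y] is smaller than [y].  Under this invariant, row insertion
   commutes with [map g]. *)
Fixpoint ties_ordered (t : seq (seq nat)) : Prop :=
  if t is r :: t' then (forall y, y \in r -> ties_below y (flatten t')) /\ ties_ordered t'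
  else True.

Lemma ties_below_sub x S1 S2 : {subset S1 <= S2} -> ties_below x S2 -> ties_below x S1.
Proof. by move=> sub tie z /sub; apply: tie. Qed.

Lemma g_lt_untied u v S : u < v -> v \in S -> ties_below u S -> g u < g v.
Proof.
move=> uv vS tie; rewrite ltn_neqAle (g_mono (ltnW uv)) andbT.
by apply/eqP=> /esym /(tie v vS); lia.
Qed.

Lemma bump_row_map x R : ties_below x R ->
  bump_row (map g R) (g x) = omap (fun p => (g p.1, map g p.2)) (bump_row R x).
Proof.
elim: R => [|y R IH] //= tie.
case: (ltnP x y) => xy.
  by rewrite (g_lt_untied xy (mem_head _ _) tie).
rewrite ltnNge g_mono //= IH; first by case: (bump_row R x) => [[? ?]|].
by apply: ties_below_sub tie => z zR; rewrite inE zR orbT.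
Qed.

Lemma rs_insert_map t x : is_tab t -> ties_ordered t -> uniq (flatten t) ->
  ties_below x (flatten t) ->
  rs_insert (map (map g) t) (g x) = (map (map g) (rs_insert t x).1, (rs_insert t x).2)
  /\ ties_ordered (rs_insert t x).1.
Proof.
elim: t x => [|r t IH] x; first by move=> _ _ _ _; split=> //=; split=> // y _ z.
move=> [_ pr _ tt] [Ir It]; rewrite -[flatten _]/(r ++ flatten t) cat_uniq.
move=> /and3P[ur _ ut] tie.
have tie_r : ties_below x r by apply: ties_below_sub tie => z zr; rewrite mem_cat zr.
have tie_t : ties_below x (flatten t).
  by apply: ties_below_sub tie => z zt; rewrite mem_cat zt orbT.
rewrite map_cons !rs_insert_cons bump_row_map //.
case E: (bump_row r x) => [[y r1]|] /=; last first.
  rewrite map_rcons; split=> //; split=> // e.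
  by rewrite mem_rcons inE => /orP[/eqP ->|/Ir].
move: E; case: bump_rowP => // a y0 b Er Ha xy [<- <-].
have yr : y0 \in r by rewrite Er mem_cat mem_head orbT.
have [-> IH2] := IH y0 tt It ut (Ir y0 yr).
split=> //; split=> // e ein z.
rewrite (perm_mem (rs_insert_perm t y0)) inE.
case/orP=> [/eqP ->|zt]; last first.
  move: ein; rewrite mem_cat inE => /or3P[ea|/eqP ->|eb].
  - by apply: (Ir e) zt; rewrite Er mem_cat ea.
  - exact: tie_t.
  - by apply: (Ir e) zt; rewrite Er mem_cat inE eb !orbT.
have gxy := g_lt_untied xy yr tie_r.
move: pr ur; rewrite Er pairwise_leq_cat_cons cat_uniq => /and4P[_ Hb _ _] /and3P[_ _ /andP[yb _]].
move: ein; rewrite mem_cat inE => /or3P[ea|/eqP ->|eb].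
- by have := g_mono (allP Ha e ea); lia.
- lia.
- by move=> _; rewrite ltn_neqAle (allP Hb e eb) andbT; apply: contraNneq yb => ->.
Qed.

End MonotoneImage.

Lemma sumn_take_mono s i j : i <= j -> sumn (take i s) <= sumn (take j s).
Proof.
by move=> ij; rewrite -(take_takel s ij) -{2}(cat_take_drop i (take j s)) sumn_cat leq_addr.
Qed.

Lemma count_take_mono T (p : pred T) i j (s : seq T) :
  i <= j -> count p (take i s) <= count p (take j s).
Proof.
by move=> ij; rewrite -(take_takel s ij) -{2}(cat_take_drop i (take j s)) count_cat leq_addr.
Qed.

(* The letter [a] whose block [sumn (take a mu) < v <= sumn (take a.+1 mu)]
   contains the value [v]. *)
Definition block_of (mu : seq nat) (v : nat) : nat :=
  count (fun k => sumn (take k.+1 mu) < v) (iota 0 (size mu)).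

Lemma block_of_mono mu : {homo block_of mu : u v / u <= v}.
Proof. by move=> u v uv; apply: sub_count => k /=; lia. Qed.

Section Shuffle.
Variables (mu w : seq nat).
Hypothesis w_letters : all (fun a => a < size mu) w.
Hypothesis w_content : forall a, count_mem a w = nth 0 mu a.
Let pi := shuffle_perm mu w.

Lemma size_shuffle_perm : size pi = size w.
Proof. exact: size_mkseq. Qed.

Lemma nth_shuffle_perm p : p < size w ->
  nth 0 pi p = sumn (take (nth 0 w p) mu) + count_mem (nth 0 w p) (take p w) + 1.
Proof. exact: nth_mkseq. Qed.

Lemma block_of_shuffle_perm p : p < size w -> block_of mu (nth 0 pi p) = nth 0 w p.
Proof.
move=> pw; rewrite nth_shuffle_perm //; set a := nth 0 w p.
have am : a < size mu by apply: (allP w_letters); apply: mem_nth.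
have ca : count_mem a (take p w) < nth 0 mu a.
  rewrite -w_content -[X in _ < count _ X](cat_take_drop p w) count_cat (drop_nth 0 pw) /=.
  by rewrite eqxx; lia.
have blk : sumn (take a.+1 mu) = sumn (take a mu) + nth 0 mu a.
  by rewrite (take_nth 0 am) sumn_rcons.
rewrite /block_of -(subnKC (ltnW am)) iotaD count_cat add0n -[X in _ = X]addn0.
congr (_ + _).
  rewrite -[X in _ = X](size_iota 0 a); apply: count_all_size; apply/allP=> k.
  by rewrite mem_iota leq0n add0n /= => ka; have := sumn_take_mono mu ka; lia.
apply: count_none => k; rewrite mem_iota /= -leqNgt.
case/andP=> ak _; apply: leq_trans (sumn_take_mono mu (ak : a.+1 <= k.+1)).
by rewrite blk -addnA leq_add2l addn1.
Qed.

Lemma shuffle_perm_tie q p : q < p -> p < size w -> nth 0 w q = nth 0 w p ->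
  nth 0 pi q < nth 0 pi p.
Proof.
move=> qp pw e; have qw : q < size w by lia.
rewrite (nth_shuffle_perm qw) (nth_shuffle_perm pw) e.
have := count_take_mono (pred1 (nth 0 w p)) w qp.
by rewrite (take_nth 0 qw) -cats1 count_cat /= e eqxx; lia.
Qed.

Lemma shuffle_perm_uniq : uniq pi.
Proof.
apply/mkseq_uniqP => q p; rewrite !inE /= => qw pw e.
have e0 : nth 0 pi q = nth 0 pi p by rewrite /pi /shuffle_perm !nth_mkseq.
have e' : nth 0 w q = nth 0 w p.
  by rewrite -block_of_shuffle_perm // -(block_of_shuffle_perm pw) e0.
case: (ltngtP q p) => // H.
  by have := shuffle_perm_tie H pw e'; rewrite e0 ltnn.
by have := shuffle_perm_tie H qw (esym e'); rewrite e0 ltnn.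
Qed.

Lemma rsk_shuffle_perm_prefix k : k <= size w ->
  rsk (take k w) = (map (map (block_of mu)) (rsk (take k pi)).1, (rsk (take k pi)).2)
  /\ ties_ordered (block_of mu) (rsk (take k pi)).1.
Proof.
elim: k => [|k IH] kw; first by rewrite !take0.
have [e1 tie1] := IH (ltnW kw).
have kp : k < size pi by rewrite size_shuffle_perm.
rewrite (take_nth 0 kw) (take_nth 0 kp) !rsk_rcons e1 /= -(block_of_shuffle_perm kw).
have perm_pi : perm_eq (flatten (rsk (take k pi)).1) (take k pi).
  by apply/permP=> p; rewrite rsk_count.
have uniq_pi : uniq (flatten (rsk (take k pi)).1).
  by rewrite (perm_uniq perm_pi) take_uniq // shuffle_perm_uniq.
have tie : ties_below (block_of mu) (nth 0 pi k) (flatten (rsk (take k pi)).1).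
  move=> z; rewrite (perm_mem perm_pi) => /(nthP 0) [q].
  rewrite size_take size_shuffle_perm kw => qk <-.
  rewrite nth_take // !block_of_shuffle_perm ?(ltn_trans qk) //.
  by apply: shuffle_perm_tie.
have [-> tie2] := rs_insert_map (@block_of_mono mu) (is_tab_rsk _) tie1 uniq_pi tie.
by rewrite !size_take size_shuffle_perm kw.
Qed.

Lemma RSK_Q_shuffle_perm : RSK_Q pi = (rsk w).2.
Proof.
have [e _] := rsk_shuffle_perm_prefix (leqnn (size w)).
by rewrite take_size -size_shuffle_perm take_size in e; rewrite e.
Qed.

End Shuffle.

(** * Words of a given content *)

Lemma sum_count_mem (T : eqType) (U s : seq T) : uniq U -> {subset s <= U} ->
  \sum_(y <- U) count_mem y s = size s.
Proof.
move=> uU; elim: s => [|x s IH] sub /=; first by rewrite big1_seq.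
have xU : x \in U by apply: sub; rewrite mem_head.
rewrite big_split /= IH; last by move=> y ys; apply: sub; rewrite inE ys orbT.
rewrite (bigD1_seq x) //= eqxx big1 ?addn0 ?add1n // => y.
by rewrite eq_sym => /negbTE ->.
Qed.

Lemma size_permutations_count (T : eqType) (U s : seq T) : uniq U -> {subset s <= U} ->
  size (permutations s) * \prod_(y <- U) (count_mem y s)`! = (size s)`!.
Proof.
move=> uU; move Hn : (size s) => n; elim: n s Hn => [|n IH] s.
  by move/size0nil => -> _; rewrite big1_seq.
move=> ss sub; have sn : 0 < size s by rewrite ss.
rewrite (perm_size (permutationsE sn)) size_allpairs_dep sumnE big_map big_distrl /=.
rewrite (eq_big_seq (fun x => count_mem x s * n`!)); last first.
  move=> x; rewrite mem_undup => xs.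
  have srem : size (rem x s) = n by rewrite size_rem // ss.
  have subr : {subset rem x s <= U} by move=> y /mem_rem /sub.
  rewrite -(IH _ srem subr) mulnCA; congr (_ * _).
  rewrite !(bigD1_seq x) ?sub //= mulnA; congr (_ * _).
    have c0 : 0 < count_mem x s by rewrite -has_count; apply/hasP; exists x => /=.
    rewrite count_mem_rem eqxx.
    by case: (count_mem x s) c0 => [|c] // _; rewrite subn1 factS.
  by apply: eq_bigr => y yx; rewrite count_mem_rem eq_sym (negbTE yx) subn0.
rewrite -big_distrl /= sum_count_mem ?undup_uniq //; last by move=> y; rewrite mem_undup.
by rewrite ss factS.
Qed.

Lemma card_perm_eq_tuples (T : finType) n (s : seq T) : size s = n ->
  #|[set w : n.-tuple T | perm_eq w s]| = size (permutations s).
Proof.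
move=> ss; set L := pmap insub (permutations s) : seq (n.-tuple T).
have -> : #|[set w : n.-tuple T | perm_eq w s]| = #|L|.
  by apply: eq_card => w; rewrite inE mem_pmap_sub mem_permutations.
rewrite (card_uniqP _) ?pmap_sub_uniq ?permutations_uniq // size_pmap_sub.
apply: count_all_size; apply/allP => t; rewrite mem_permutations => /perm_size ->.
by rewrite ss.
Qed.

Section Content.
Variable mu : seq nat.
Let m := size mu.

Definition content_word : seq 'I_m :=
  flatten [seq nseq (nth 0 mu i) i | i : 'I_m <- enum 'I_m].

Lemma count_content_word (j : 'I_m) : count_mem j content_word = nth 0 mu j.
Proof.
rewrite /content_word count_flatten -map_comp sumnE big_map.
rewrite (bigD1_seq j) ?mem_enum ?enum_uniq //= count_nseq /= eqxx mul1n.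
by rewrite big1 ?addn0 // => i; rewrite count_nseq /=; case: eqP => // ->; rewrite eqxx.
Qed.

Lemma size_content_word : size content_word = sumn mu.
Proof.
rewrite /content_word size_flatten /shape -map_comp sumnE big_map.
rewrite (eq_bigr (fun i : 'I_m => nth 0 mu i)); last by move=> i _; rewrite /= size_nseq.
by rewrite big_enum /= sumnE (big_nth 0) big_mkord.
Qed.

Lemma has_content_perm_eq (w : seq 'I_m) :
  [forall i : 'I_m, count_mem i w == nth 0 mu i] = perm_eq w content_word.
Proof.
apply/forallP/idP => [H|H i].
  by apply/allP => x _; rewrite /= count_content_word; apply: H.
by rewrite -count_content_word; apply/eqP/permP.
Qed.

Lemma card_has_content :
  #|[set w : (sumn mu).-tuple 'I_m | has_content w]| * \prod_(k <- mu) k`! = (sumn mu)`!.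
Proof.
have -> : #|[set w : (sumn mu).-tuple 'I_m | has_content w]| =
          #|[set w : (sumn mu).-tuple 'I_m | perm_eq w content_word]|.
  by apply: eq_card => w; rewrite !inE /has_content has_content_perm_eq.
rewrite card_perm_eq_tuples ?size_content_word //.
rewrite -[in RHS]size_content_word -(size_permutations_count (enum_uniq 'I_m));
  last by move=> i; rewrite mem_enum.
congr (_ * _); rewrite big_enum /= (big_nth 0) big_mkord.
by apply: eq_bigr => i _; rewrite count_content_word.
Qed.

End Content.

(** * Semistandard tableaux *)

Lemma count_sorted_downward (p : pred nat) s j : pairwise leq s ->
  (forall x y, x <= y -> p y -> p x) ->
  (j < count p s) = (j < size s) && p (nth 0 s j).
Proof.
move=> ps down; elim: s j ps => [|u s IH] j //= /andP[us ps].
case: (boolP (p u)) => pu; first by case: j => [|j] //=; rewrite add1n ltnS IH.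
have pz : forall y, y \in u :: s -> ~~ p y.
  by move=> y; rewrite inE => /predU1P[->|/(allP us) uy] //; apply: contra pu; apply: down.
rewrite add0n (_ : count p s = 0); last first.
  by apply: count_none => y ys; apply: pz; rewrite inE ys orbT.
by rewrite ltn0; apply/esym/negP => /andP[js]; apply/negP/pz; apply: mem_nth.
Qed.

Lemma aboveP r s : pairwise leq r -> pairwise leq s ->
  above r s <-> size s <= size r /\ forall j, j < size s -> nth 0 r j < nth 0 s j.
Proof.
move=> pr ps.
have cle j v : (j < cnt_le s v) = (j < size s) && (nth 0 s j <= v).
  by apply: count_sorted_downward => // x y xy /(leq_trans xy).
have clt j v : (j < cnt_lt r v) = (j < size r) && (nth 0 r j < v).
  by apply: count_sorted_downward => // x y xy /(leq_ltn_trans xy).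
split=> [H | [sz H] v].
  have key j : j < size s -> j < size r /\ nth 0 r j < nth 0 s j.
    move=> js; have : j < cnt_lt r (nth 0 s j) by apply: leq_trans (H _); rewrite cle js /=.
    by rewrite clt => /andP.
  split; last by move=> j /key[].
  by case: (ltnP (size r) (size s)) => // /key[]; rewrite ltnn.
case E: (cnt_le s v) => [|c] //.
have /andP[cs csv] : (c < size s) && (nth 0 s c <= v) by rewrite -cle E.
by rewrite clt (leq_trans cs sz) (leq_trans (H c cs) csv).
Qed.

Lemma cols_strictP t : cols_strict t <->
  forall i j, i < size t -> j < size (nth [::] t i.+1) ->
    nth 0 (nth [::] t i) j < nth 0 (nth [::] t i.+1) j.
Proof.
split.
  move=> /allP H i j it jt; have := H i; rewrite mem_iota leq0n add0n => /(_ it) /allP /(_ j).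
  by rewrite mem_iota leq0n add0n; apply.
move=> H; apply/allP => i; rewrite mem_iota leq0n add0n => it.
by apply/allP => j; rewrite mem_iota leq0n add0n => jt; apply: H.
Qed.

Lemma is_tabP t : is_tab t <-> [/\ all (fun r => r != [::]) t, all (pairwise leq) t &
  forall i, above (nth [::] t i) (nth [::] t i.+1)].
Proof.
split=> [tt | [ne pw ab]].
  split; last by move=> i; apply: is_tab_above.
    by elim: t tt => [|r t IH] //= [-> _ _ /IH].
  by apply/allP=> r /(nthP [::])[i _ <-]; apply: is_tab_row_sorted.
elim: t ne pw ab => [|r t IH] //= /andP[rn ne] /andP[pr pw] ab; split=> //.
  by have := ab 0; case: (t).
by apply: IH => // i; apply: (ab i.+1).
Qed.

Lemma is_tab_ssyt t : is_tab t -> is_ssyt t.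
Proof.
move=> tt; apply/andP; split.
  apply/allP => r /(nthP [::]) [i it <-]; rewrite sorted_pairwise; last exact: leq_trans.
  exact: is_tab_row_sorted.
apply/cols_strictP => i j it jt.
have [_ H] := (aboveP (is_tab_row_sorted i tt) (is_tab_row_sorted i.+1 tt)).1 (is_tab_above i tt).
exact: H.
Qed.

Lemma ssyt_is_tab t : all (fun r => r != [::]) t -> sorted geq (map size t) -> is_ssyt t ->
  is_tab t.
Proof.
move=> ne sg /andP[so cst]; have pw : all (pairwise leq) t.
  by apply: sub_all so => r; rewrite sorted_pairwise //; apply: leq_trans.
apply/is_tabP; split=> // i.
have pwn k : pairwise leq (nth [::] t k).
  by case: (ltnP k (size t)) => kt; [apply: (allP pw); apply: mem_nth | rewrite nth_default].
case: (ltnP i.+1 (size t)) => it; last by rewrite (nth_default _ it).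
apply/aboveP => //; split; last by move/cols_strictP: cst => H j; apply: H; apply: ltnW.
move: sg; rewrite sorted_pairwise; last by move=> a b c ba cb; apply: leq_trans cb ba.
move/(pairwiseP 0) => /(_ i i.+1); rewrite !inE size_map !(nth_map [::]) ?(ltnW it) //.
by apply.
Qed.

(** * Shuffles with a given recording tableau *)

Lemma syt_is_std_tab la T : all (fun k => 0 < k) la -> sorted geq la -> is_syt la T ->
  is_std_tab T (sumn la).
Proof.
move=> la_pos la_sorted /and4P[/eqP shT pT sT cT]; split=> //; apply: ssyt_is_tab.
- by apply: shape_pos_rows_neq0; rewrite shT.
- by rewrite shT.
- by apply/andP; split=> //; apply: sub_all sT => r; apply: sub_sorted => a b /ltnW.
Qed.

Lemma count_mem_val m (s : seq 'I_m) (i : 'I_m) : count_mem i s = count_mem (val i) (map val s).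
Proof. by rewrite count_map; apply: eq_count => x. Qed.

Lemma val_pmap_insub m (s : seq nat) : all (fun a => a < m) s ->
  map val (pmap (insub : nat -> option 'I_m) s) = s.
Proof.
elim: s => [|x s IH] //= /andP[xm /IH H].
by rewrite (insubT (fun a => a < m) xm) /= H.
Qed.

Lemma map_val_insubd_pmap m N (w0 : N.-tuple 'I_m) (s : seq nat) :
  all (fun a => a < m) s -> size s = N -> map val (insubd w0 (pmap insub s)) = s.
Proof.
move=> sm sN; rewrite insubdK ?val_pmap_insub //.
by rewrite unfold_in /= -(size_map val) val_pmap_insub ?sN.
Qed.

Section ShufflesWithRecordingTableau.
Variables (mu la : seq nat) (T : seq (seq nat)).
Let m := size mu.
Let N := sumn mu.
Hypothesis la_pos : all (fun k => 0 < k) la.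
Hypothesis la_sorted : sorted geq la.
Hypothesis T_shape : map size T = la.
Hypothesis T_std : is_std_tab T N.

Lemma has_content_nat (w : seq 'I_m) : has_content w ->
  forall a, count_mem a (map val w) = nth 0 mu a.
Proof.
move=> /forallP H a; case: (ltnP a m) => am; first by rewrite -(eqP (H (Ordinal am))) count_mem_val.
rewrite nth_default //; apply/count_memPn/mapP => -[y _ ey].
by have := ltn_ord y; rewrite -ey; lia.
Qed.

Lemma has_content_count (w w' : seq 'I_m) :
  (forall p, count p (map val w) = count p (map val w')) -> has_content w = has_content w'.
Proof. by move=> cnt; apply: eq_forallb => i; rewrite !count_mem_val cnt. Qed.

Lemma all_ord_val (w : seq 'I_m) : all (fun a => a < m) (map val w).
Proof. by apply/allP=> _ /mapP[i _ ->]; apply: ltn_ord. Qed.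

Let setA := [set w : N.-tuple 'I_m |
  has_content w && (RSK_Q (shuffle_perm mu (map val w)) == T)].
Let setK := [set w : N.-tuple 'I_m | has_content w && is_ssyt (reshape la (map val w))].

Lemma in_setA w : (w \in setA) = has_content w && ((rsk (map val w)).2 == T).
Proof.
rewrite inE; apply: andb_id2l => cw.
by rewrite RSK_Q_shuffle_perm ?all_ord_val //; apply: has_content_nat.
Qed.

(* [w] is only the default of [insubd], never returned ([val_insertion_reading]). *)
Definition insertion_reading (w : N.-tuple 'I_m) : N.-tuple 'I_m :=
  insubd w (pmap insub (flatten (rsk (map val w)).1)).

Lemma val_insertion_reading w : map val (insertion_reading w) = flatten (rsk (map val w)).1.
Proof.
apply: map_val_insubd_pmap.
  by rewrite all_count rsk_count -count_predT rsk_count count_predT -all_count all_ord_val.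
by rewrite -count_predT rsk_count count_predT size_map size_tuple.
Qed.

Lemma insertion_reading_inj : {in setA &, injective insertion_reading}.
Proof.
move=> w1 w2; rewrite !in_setA => /andP[_ /eqP Q1] /andP[_ /eqP Q2] e.
have eP : (rsk (map val w1)).1 = (rsk (map val w2)).1.
  by rewrite -(flattenK (rsk _).1) -(flattenK (rsk (map val w2)).1) -!val_insertion_reading e
    /shape !rsk_shape Q1 Q2.
have : rsk (map val w1) = rsk (map val w2).
  by rewrite [LHS]surjective_pairing [RHS]surjective_pairing eP Q1 Q2.
move/rsk_inj; rewrite !size_map !size_tuple => /(_ erefl) /(inj_map val_inj).
exact: val_inj.
Qed.

Lemma insertion_reading_image : insertion_reading @: setA = setK.
Proof.
apply/setP => u; rewrite inE; apply/imsetP/idP => [[w] | /andP[cu su]].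
  rewrite in_setA => /andP[cw /eqP Q] ->; rewrite val_insertion_reading.
  rewrite (has_content_count (w' := w)) => [|p]; last by rewrite val_insertion_reading rsk_count.
  rewrite cw -T_shape -Q -rsk_shape -[map size _]/(shape _) flattenK.
  exact/is_tab_ssyt/is_tab_rsk.
set P := reshape la (map val u).
have szu : size (map val u) = sumn la.
  by rewrite size_map size_tuple -T_shape -size_flatten (perm_size T_std.2) size_iota.
have shP : map size P = la by apply: reshapeKl; rewrite szu.
have flP : flatten P = map val u by apply: reshapeKr; rewrite szu.
have tP : is_tab P.
  by apply: ssyt_is_tab; rewrite ?shP //; apply: shape_pos_rows_neq0; rewrite shP.
have [x [sx ex]] := rsk_onto T_std tP (etrans shP (esym T_shape)).
have cx p : count p x = count p (map val u) by rewrite -rsk_count ex flP.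
have xm : all (fun a => a < m) x.
  by rewrite all_count cx -(count_predT x) cx count_predT -all_count all_ord_val.
set w := insubd u (pmap insub x) : N.-tuple 'I_m.
have vw : map val w = x by apply: map_val_insubd_pmap.
exists w; last by apply: val_inj; apply: (inj_map val_inj); rewrite val_insertion_reading vw ex.
by rewrite in_setA vw ex eqxx andbT (has_content_count (w' := u)) // vw.
Qed.

Lemma card_shuffles_recording : #|setA| = #|setK|.
Proof. by rewrite -insertion_reading_image card_in_imset //; apply: insertion_reading_inj. Qed.

End ShufflesWithRecordingTableau.

Import GRing.Theory Num.Theory.

Theorem lemma7p4 (n : nat) (mu la : seq nat) (T : seq (seq nat)) :
  is_composition n mu -> is_partition n la -> is_syt la T ->
  shuffle_prob mu T = ((Kostka la mu)%:R / multinomial n mu)%R.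
Proof.
move=> /andP[_ /eqP mu_sum] /andP[/andP[la_sorted la_pos] /eqP la_sum] sytT.
have T_std := syt_is_std_tab la_pos la_sorted sytT.
have T_shape : map size T = la by case/and4P: sytT => /eqP.
rewrite la_sum -mu_sum in T_std.
rewrite /shuffle_prob /multinomial /Kostka la_sum -mu_sum.
rewrite (card_shuffles_recording la_pos la_sorted T_shape T_std).
rewrite -(card_has_content mu) natrM -natr_prod mulfK //.
by rewrite pnatr_eq0 -lt0n; apply: prodn_gt0 => i; apply: fact_gt0.
Qed.
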